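(* Let $\pi_E$ be a deterministic expert policy in a finite MDP whose induced chain $P_E$ is irreducible and aperiodic, with stationary state-action distribution $\rho^E$ and mixing time $\tau_{\mathrm{mix}}$. Let $D$ be the set of state-action pairs visited by an expert trajectory, and $R_{\mathrm{int}}(s,a)=\mathbb{1}\{(s,a)\in D\}$. Let $\pi_I$ be an imitation learner policy whose induced chain is irreducible and aperiodic, with stationary state-action distribution $\rho^I$, and suppose $\mathbb{E}_{\rho^I}[R_{\mathrm{int}}]=1-\kappa$. Then for every reward function $R:S\times A\to[0,1]$, $$\mathbb{E}_{\rho^I}[R]\;\ge\;(1-\kappa)\,\mathbb{E}_{\rho^E}[R]-4\tau_{\mathrm{mix}}\,\kappa.$$
   Context: For a policy $\pi$ in a finite MDP (states $S$, actions $A$, kernel $T$), $P_\pi(s,s')=\sum_a\pi(a\mid s)T(s'\mid s,a)$; if irreducible and aperiodic it has stationary distribution $\rho^\pi_S$, and $\rho^\pi(s,a)=\rho^\pi_S(s)\pi(a\mid s)$; $\mathbb{E}_{\rho}[R]=\sum_{s,a}\rho(s,a)R(s,a)$. Here $P_E=P_{\pi_E}$, $\rho^E=\rho^{\pi_E}$, $\rho^E_S=\rho^{\pi_E}_S$, $\rho^I=\rho^{\pi_I}$. The expert trajectory is generated by running $\pi_E$ in the MDP, so every $(s,a)\in D$ satisfies $\pi_E(a\mid s)=1$. The mixing time $\tau_{\mathrm{mix}}$ is the smallest integer $t\ge0$ with $\max_{s'}\|\mathbb{1}(s')^\top P_E^t-\rho^E_S\|_{\mathrm{TV}}\le\tfrac14$,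 where $\|\rho_1-\rho_2\|_{\mathrm{TV}}=\sup_M|\rho_1(M)-\rho_2(M)|$. *)

From HB Require Import structures.
From mathcomp Require Import all_boot all_order all_algebra.
Set Implicit Arguments. Unset Strict Implicit. Unset Printing Implicit Defensive.
Import Order.TTheory GRing.Theory Num.Theory.
Local Open Scope ring_scope.

Section MDP.
Variables (R : realFieldType) (S A : finType).

Definition is_distr (T : finType) (p : T -> R) : Prop :=
  (forall x, 0 <= p x) /\ \sum_x p x = 1.

Definition is_kernel (K : S -> A -> S -> R) : Prop :=
  forall s a, is_distr (K s a).

Definition is_policy (pi : S -> A -> R) : Prop :=
  forall s, is_distr (pi s).

Definition det_policy (f : S -> A) : S -> A -> R :=
  fun s a => (a == f s)%:R.

Definition induced_chain (K : S -> A -> S -> R) (pi : S -> A -> R) : S -> S -> R :=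
  fun s s' => \sum_a pi s a * K s a s'.

Fixpoint chain_pow (P : S -> S -> R) (t : nat) : S -> S -> R :=
  match t with
  | 0 => fun s s' => (s == s')%:R
  | t'.+1 => fun s s' => \sum_u chain_pow P t' s u * P u s'
  end.

Definition irreducible (P : S -> S -> R) : Prop :=
  forall s s', exists t, 0 < chain_pow P t s s'.

Definition aperiodic (P : S -> S -> R) : Prop :=
  forall s (d : nat),
    (forall t : nat, (0 < t)%N -> 0 < chain_pow P t s s -> (d %| t)%N) -> d = 1%N.

Definition is_stationary (P : S -> S -> R) (rho : S -> R) : Prop :=
  is_distr rho /\ forall s', \sum_s rho s * P s s' = rho s'.

Definition sa_distr (rhoS : S -> R) (pi : S -> A -> R) : S -> A -> R :=
  fun s a => rhoS s * pi s a.

Definition expect (rho : S -> A -> R) (Rw : S -> A -> R) : R :=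
  \sum_s \sum_a rho s a * Rw s a.

Definition tv_dist (r1 r2 : S -> R) : R :=
  \big[Num.max/0]_(M : {set S}) `|\sum_(x in M) r1 x - \sum_(x in M) r2 x|.

Definition mix_ok (P : S -> S -> R) (rho : S -> R) (t : nat) : Prop :=
  forall s', tv_dist (chain_pow P t s') rho <= 4^-1.

Definition is_mixing_time (P : S -> S -> R) (rho : S -> R) (tau : nat) : Prop :=
  mix_ok P rho tau /\ forall t, mix_ok P rho t -> (tau <= t)%N.

Definition expert_traj (K : S -> A -> S -> R) (f : S -> A) (s0 : S) (tr : seq S) : bool :=
  path (fun s s' => 0 < K s (f s) s') s0 tr.

Definition traj_pairs (f : S -> A) (s0 : S) (tr : seq S) : seq (S * A) :=
  [seq (s, f s) | s <- s0 :: tr].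

Definition R_int (D : seq (S * A)) : S -> A -> R :=
  fun s a => ((s, a) \in D)%:R.

End MDP.

Arguments det_policy {R S A} f s a.
Arguments R_int {R S A} D s a.

From HB Require Import structures.
From mathcomp Require Import all_boot all_order all_algebra.
From mathcomp Require Import ring lra.
Import Order.TTheory GRing.Theory Num.Theory.
Set Implicit Arguments. Unset Strict Implicit.
Local Open Scope ring_scope.

(* Write P for the expert chain, Q for the learner chain, rho_E and rho_I for
   their stationary laws, d = rho_I - rho_E, and
   c = sum_s rho_I(s) pi_I(f_E s | s) for the probability that the learner
   plays the expert action in its own stationary regime.
   1. Perturbation: as rho_E P = rho_E and rho_I Q = rho_I, d - dP = rho_I (Q - P),
      whose l1 norm is at most 2 (1 - c).
   2. Mixing: d - dP^tau = sum_{t < tau} (d - dP) P^t, and P^tau at least halves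
      the l1 norm of a zero-mass vector, so |d|_1 <= 2 tau |d - dP|_1.
   3. Rewards: with r(s) = R(s, f_E s), E_E[R] = sum rho_E r, while
      E_I[R] >= sum rho_I r - (1 - c) >= sum rho_E r - |d|_1 / 2 - (1 - c).
   4. The intrinsic reward only rewards expert pairs, hence 1 - kappa <= c;
      this concludes when tau >= 1, and tau = 0 forces a single state. *)

Section MarkovChains.
Variables (R : realFieldType) (S : finType).

Definition stochastic (P : S -> S -> R) : Prop := forall s, is_distr (P s).

Definition norm1 (x : S -> R) : R := \sum_s `|x s|.

Definition vmul (x : S -> R) (P : S -> S -> R) : S -> R :=
  fun s' => \sum_s x s * P s s'.

Definition vpow (P : S -> S -> R) (n : nat) (x : S -> R) : S -> R :=
  iter n (vmul^~ P) x.

Lemma norm1_ge0 (x : S -> R) : 0 <= norm1 x.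
Proof. by apply: sumr_ge0 => s _; apply: normr_ge0. Qed.

Lemma norm1_vmul (P : S -> S -> R) (x : S -> R) :
  stochastic P -> norm1 (vmul x P) <= norm1 x.
Proof.
move=> hP; rewrite /norm1 /vmul.
apply: (@le_trans _ _ (\sum_s' \sum_s `|x s| * P s s')).
  apply: ler_sum => s' _; apply: le_trans (ler_norm_sum _ _ _) _.
  by apply: ler_sum => s _; rewrite normrM (ger0_norm ((hP s).1 s')).
rewrite exchange_big /=; apply: ler_sum => s _.
by rewrite -mulr_sumr (hP s).2 mulr1.
Qed.

Lemma norm1_vpow (P : S -> S -> R) (n : nat) (x : S -> R) :
  stochastic P -> norm1 (vpow P n x) <= norm1 x.
Proof.
move=> hP; elim: n => [|n IH] //.
exact: le_trans (norm1_vmul _ hP) IH.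
Qed.

Lemma vpowB (P : S -> S -> R) (n : nat) (x y : S -> R) (s : S) :
  vpow P n (fun s => x s - y s) s = vpow P n x s - vpow P n y s.
Proof.
elim: n s => [|n IH] s' //=.
by rewrite /vmul -sumrB; apply: eq_bigr => s _; rewrite IH mulrBl.
Qed.

Lemma vpow_telescope (P : S -> S -> R) (n : nat) (d : S -> R) (s : S) :
  d s - vpow P n d s = \sum_(t < n) vpow P t (fun s => d s - vmul d P s) s.
Proof.
have step t : vpow P t (fun s => d s - vmul d P s) s = vpow P t d s - vpow P t.+1 d s.
  by rewrite vpowB /vpow iterSr.
under eq_bigr do rewrite step.
rewrite -(big_mkord xpredT (fun t => vpow P t d s - vpow P t.+1 d s)).
rewrite -[d s]/(vpow P 0 d s) -opprB -(telescope_sumr (fun t => vpow P t d s)) //.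
rewrite -sumrN.
by apply: eq_bigr => t _; rewrite opprB.
Qed.

Lemma vpow_chain_pow (P : S -> S -> R) (n : nat) (x : S -> R) (s' : S) :
  vpow P n x s' = \sum_s x s * chain_pow P n s s'.
Proof.
elim: n s' => [|n IH] s' /=.
  rewrite (bigD1 s') //= eqxx mulr1 big1 ?addr0 // => s /negbTE.
  by rewrite eq_sym => ->; rewrite mulr0.
rewrite /vmul (eq_bigr (fun u => \sum_s x s * chain_pow P n s u * P u s')); last first.
  by move=> u _; rewrite IH mulr_suml.
rewrite exchange_big /=; apply: eq_bigr => s _.
by rewrite mulr_sumr; apply: eq_bigr => u _; rewrite mulrA.
Qed.

Lemma tv_dist_ge (r1 r2 : S -> R) (M : {set S}) :
  `|\sum_(x in M) r1 x - \sum_(x in M) r2 x| <= tv_dist r1 r2.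
Proof. exact: (le_bigmax _ _ M). Qed.

(* the l1 distance is at most twice the total variation distance, realized by
   the set where r1 dominates r2 and its complement *)
Lemma l1_le_tv (r1 r2 : S -> R) :
  \sum_x `|r1 x - r2 x| <= 2%:R * tv_dist r1 r2.
Proof.
set M := [set x | r2 x <= r1 x].
rewrite (bigID (mem M)) /=.
have sum_in : \sum_(i in M) `|r1 i - r2 i| = \sum_(i in M) r1 i - \sum_(i in M) r2 i.
  rewrite -sumrB; apply: eq_bigr => i; rewrite inE => h.
  by rewrite ger0_norm // subr_ge0.
have sum_out : \sum_(i | i \notin M) `|r1 i - r2 i| =
    - (\sum_(i in ~: M) r1 i - \sum_(i in ~: M) r2 i).
  rewrite -sumrB -sumrN; apply: eq_big => i; first by rewrite !inE.
  by rewrite inE -ltNge => h; rewrite ltr0_norm // subr_lt0.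
rewrite sum_in sum_out mulr2n mulrDl mul1r.
apply: lerD; first exact: le_trans (ler_norm _) (tv_dist_ge _ _ _).
by apply: le_trans (tv_dist_ge r1 r2 (~: M)); rewrite -normrN ler_norm.
Qed.

(* at a mixing time, P^n at least halves the l1 norm of a zero-mass vector:
   d P^n = sum_s d(s) (P^n(s, .) - rho) and each row is 1/4-close to rho in TV *)
Lemma mixing_halves (P : S -> S -> R) (rho d : S -> R) (n : nat) :
  \sum_s d s = 0 -> mix_ok P rho n -> 2%:R * norm1 (vpow P n d) <= norm1 d.
Proof.
move=> hd0 hmix.
have centered s' : vpow P n d s' = \sum_s d s * (chain_pow P n s s' - rho s').
  rewrite vpow_chain_pow; under [RHS]eq_bigr => s _ do rewrite mulrBr.
  by rewrite sumrB -mulr_suml hd0 mul0r subr0.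
have bound : norm1 (vpow P n d) <= norm1 d * (2%:R * 4^-1).
  rewrite /norm1 mulr_suml.
  apply: (@le_trans _ _ (\sum_s' \sum_s `|d s| * `|chain_pow P n s s' - rho s'|)).
    apply: ler_sum => s' _; rewrite centered; apply: le_trans (ler_norm_sum _ _ _) _.
    by apply: ler_sum => s _; rewrite normrM.
  rewrite exchange_big /=; apply: ler_sum => s _.
  rewrite -mulr_sumr; apply: ler_wpM2l; first exact: normr_ge0.
  by apply: le_trans (l1_le_tv _ rho) _; apply: ler_wpM2l.
have := norm1_ge0 d; lra.
Qed.

Lemma mixing_l1_bound (P : S -> S -> R) (rho d : S -> R) (tau : nat) :
  stochastic P -> \sum_s d s = 0 -> mix_ok P rho tau ->
  norm1 d <= 2%:R * tau%:R * norm1 (fun s => d s - vmul d P s).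
Proof.
move=> hP hd0 hmix; set nu := fun s => d s - vmul d P s.
have split : norm1 d <= tau%:R * norm1 nu + norm1 (vpow P tau d).
  rewrite {1}/norm1.
  apply: (@le_trans _ _
    (\sum_s (\sum_(t < tau) `|vpow P t nu s| + `|vpow P tau d s|))).
    apply: ler_sum => s _.
    rewrite -[d s](subrK (vpow P tau d s)) vpow_telescope.
    by apply: le_trans (ler_normD _ _) _; rewrite lerD2r ler_norm_sum.
  rewrite big_split /= exchange_big /= lerD2r.
  apply: (@le_trans _ _ (\sum_(t < tau) norm1 nu)).
    by apply: ler_sum => t _; apply: norm1_vpow.
  by rewrite sumr_const card_ord mulr_natl.
have := mixing_halves hd0 hmix; lra.
Qed.

Lemma zero_mass_integral (d r : S -> R) :
  \sum_s d s = 0 -> (forall s, 0 <= r s <= 1) ->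
  2%:R * `|\sum_s d s * r s| <= norm1 d.
Proof.
move=> hd0 hr.
have recenter : 2%:R * \sum_s d s * r s = \sum_s d s * (2%:R * r s - 1).
  under [RHS]eq_bigr => s _ do rewrite mulrBr mulr1.
  by rewrite sumrB hd0 subr0 mulr_sumr; apply: eq_bigr => s _; ring.
rewrite -[2%:R]ger0_norm // -normrM recenter.
apply: le_trans (ler_norm_sum _ _ _) _; apply: ler_sum => s _.
rewrite normrM -[X in _ <= X]mulr1 ler_wpM2l //.
by have := hr s; case/andP => h0 h1; rewrite ler_norml; apply/andP; split; lra.
Qed.

(* at mixing time 0, every state carries stationary mass >= 3/4: one state *)
Lemma mixing_time0_single_state (P : S -> S -> R) (rho : S -> R) :
  is_distr rho -> mix_ok P rho 0 -> forall s s' : S, s = s'.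
Proof.
move=> [rho0 rho1] hmix.
have heavy x : 1 - rho x <= 4^-1.
  have := tv_dist_ge (chain_pow P 0 x) rho [set x].
  rewrite !big_set1 /= eqxx => h.
  exact: le_trans (ler_norm _) (le_trans h (hmix x)).
move=> s s'; apply/eqP; apply/negPn/negP => hne.
have : rho s + rho s' <= 1.
  rewrite -rho1 (bigD1 s) //= (bigD1 s') 1?eq_sym //= addrA lerDl.
  by apply: sumr_ge0 => x _.
have := heavy s; have := heavy s'; lra.
Qed.

End MarkovChains.

Section MDPComparison.
Variables (R : realFieldType) (S A : finType) (K : S -> A -> S -> R).
Hypothesis hK : is_kernel K.

Lemma sum_indicator (T : finType) (b : T) (F : T -> R) :
  \sum_a (a == b)%:R * F a = F b.
Proof.
rewrite (bigD1 b) //= eqxx mul1r big1 ?addr0 // => a /negbTE ->.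
by rewrite mul0r.
Qed.

Lemma det_chainE (f : S -> A) (s s' : S) :
  induced_chain K (det_policy f) s s' = K s (f s) s'.
Proof. by rewrite /induced_chain /det_policy sum_indicator. Qed.

Lemma det_chain_stochastic (f : S -> A) : stochastic (induced_chain K (det_policy f)).
Proof.
move=> s; split; first by move=> s'; rewrite det_chainE; exact: (hK s (f s)).1.
by under eq_bigr => s' _ do rewrite det_chainE; exact: (hK s (f s)).2.
Qed.

Lemma policy_bounds (pi : S -> A -> R) (s : S) (a : A) :
  is_policy pi -> 0 <= pi s a <= 1.
Proof.
move=> hpi; have [h0 h1] := hpi s; rewrite h0 /= -h1.
by rewrite (bigD1 a) //= lerDl; apply: sumr_ge0 => b _.
Qed.

(* rows of the two chains differ only through the mass put on non-expert actions *)
Lemma chain_row_deviation (pi : S -> A -> R) (f : S -> A) (s : S) :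
  is_policy pi ->
  \sum_s' `|induced_chain K pi s s' - induced_chain K (det_policy f) s s'|
    <= 2%:R * (1 - pi s (f s)).
Proof.
move=> hpi.
have mixture s' : induced_chain K pi s s' - induced_chain K (det_policy f) s s'
    = \sum_a pi s a * (K s a s' - K s (f s) s').
  rewrite det_chainE /induced_chain; under [RHS]eq_bigr => a _ do rewrite mulrBr.
  by rewrite sumrB -mulr_suml (hpi s).2 mul1r.
have off_expert : 1 - pi s (f s) = \sum_(a | a != f s) pi s a.
  by rewrite -(hpi s).2 (bigD1 (f s)) //= addrC addrK.
apply: (@le_trans _ _ (\sum_s' \sum_a pi s a * `|K s a s' - K s (f s) s'|)).
  apply: ler_sum => s' _; rewrite mixture; apply: le_trans (ler_norm_sum _ _ _) _.
  apply: ler_sum => a _; rewrite normrM ger0_norm //.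
  by case/andP: (policy_bounds s a hpi).
rewrite exchange_big /= (bigD1 (f s)) //=.
rewrite big1 ?add0r; last by move=> s' _; rewrite subrr normr0 mulr0.
rewrite off_expert mulr_sumr; apply: ler_sum => a _; rewrite -mulr_sumr mulrC.
apply: ler_wpM2r; first by case/andP: (policy_bounds s a hpi).
apply: (@le_trans _ _ (\sum_s' (K s a s' + K s (f s) s'))).
  apply: ler_sum => s' _; apply: le_trans (ler_normB _ _) _.
  by rewrite !ger0_norm //; [exact: (hK s (f s)).1 | exact: (hK s a).1].
by rewrite big_split /= (hK s a).2 (hK s (f s)).2.
Qed.

Definition agreement (rho : S -> R) (pi : S -> A -> R) (f : S -> A) : R :=
  \sum_s rho s * pi s (f s).

Lemma agreement_le1 (rho : S -> R) (pi : S -> A -> R) (f : S -> A) :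
  is_distr rho -> is_policy pi -> agreement rho pi f <= 1.
Proof.
move=> [rho0 rho1] hpi; rewrite -rho1; apply: ler_sum => s _.
by apply: ler_piMr => //; case/andP: (policy_bounds s (f s) hpi).
Qed.

Lemma stationary_deviation (pi : S -> A -> R) (f : S -> A) (rhoI rhoE : S -> R) :
  is_policy pi ->
  is_stationary (induced_chain K pi) rhoI ->
  is_stationary (induced_chain K (det_policy f)) rhoE ->
  norm1 (fun s => rhoI s - rhoE s
           - vmul (fun s => rhoI s - rhoE s) (induced_chain K (det_policy f)) s)
    <= 2%:R * (1 - agreement rhoI pi f).
Proof.
move=> hpi [[rhoI0 rhoI1] statI] [_ statE].
set d := fun s => rhoI s - rhoE s.
set P := induced_chain K (det_policy f); set Q := induced_chain K pi.
have perturb s' : d s' - vmul d P s' = \sum_s rhoI s * (Q s s' - P s s').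
  rewrite /d /vmul; under eq_bigr => s _ do rewrite mulrBl.
  under [RHS]eq_bigr => s _ do rewrite mulrBr.
  by rewrite !sumrB statI statE; ring.
apply: (@le_trans _ _ (\sum_s' \sum_s rhoI s * `|Q s s' - P s s'|)).
  apply: ler_sum => s' _; rewrite perturb; apply: le_trans (ler_norm_sum _ _ _) _.
  by apply: ler_sum => s _; rewrite normrM (ger0_norm (rhoI0 s)).
rewrite exchange_big /=.
apply: (@le_trans _ _ (\sum_s rhoI s * (2%:R * (1 - pi s (f s))))).
  by apply: ler_sum => s _; rewrite -mulr_sumr ler_wpM2l ?chain_row_deviation.
suff -> : \sum_s rhoI s * (2%:R * (1 - pi s (f s)))
    = 2%:R * (\sum_s rhoI s - agreement rhoI pi f) by rewrite rhoI1.
by rewrite mulrBr !mulr_sumr -sumrB; apply: eq_bigr => s _; ring.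
Qed.

(* the intrinsic reward is only earned on expert state-action pairs *)
Lemma expect_Rint_le_agreement (rho : S -> R) (pi : S -> A -> R) (f : S -> A)
    (s0 : S) (tr : seq S) :
  is_distr rho -> is_policy pi ->
  expect (sa_distr rho pi) (R_int (traj_pairs f s0 tr)) <= agreement rho pi f.
Proof.
move=> [rho0 _] hpi; rewrite /expect /sa_distr /agreement.
apply: ler_sum => s _; rewrite (bigD1 (f s)) //= big1 ?addr0.
  rewrite /R_int; apply: ler_piMr; last by case: (_ \in _).
  by apply: mulr_ge0 => //; case/andP: (policy_bounds s (f s) hpi).
move=> a ha; rewrite /R_int.
suff -> : (s, a) \in traj_pairs f s0 tr = false by rewrite mulr0.
apply/negbTE/mapP => -[x _ [e1 e2]].
by move: ha; rewrite e2 e1 eqxx.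
Qed.

Lemma expect_det (rho : S -> R) (f : S -> A) (Rw : S -> A -> R) :
  expect (sa_distr rho (det_policy f)) Rw = \sum_s rho s * Rw s (f s).
Proof.
rewrite /expect /sa_distr /det_policy; apply: eq_bigr => s _.
under eq_bigr => a _ do rewrite mulrAC mulrC.
by rewrite sum_indicator mulrC.
Qed.

(* dropping non-expert actions only loses nonnegative reward *)
Lemma expect_ge_agreed (rho : S -> R) (pi : S -> A -> R) (f : S -> A)
    (Rw : S -> A -> R) :
  is_distr rho -> is_policy pi -> (forall s a, 0 <= Rw s a <= 1) ->
  \sum_s rho s * pi s (f s) * Rw s (f s) <= expect (sa_distr rho pi) Rw.
Proof.
move=> [rho0 _] hpi hRw; rewrite /expect /sa_distr; apply: ler_sum => s _.
rewrite (bigD1 (f s)) //= lerDl; apply: sumr_ge0 => a _.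
apply: mulr_ge0; first apply: mulr_ge0 => //.
  by case/andP: (policy_bounds s a hpi).
by case/andP: (hRw s a).
Qed.

Lemma expect_lower_bound (rho : S -> R) (pi : S -> A -> R) (f : S -> A)
    (Rw : S -> A -> R) :
  is_distr rho -> is_policy pi -> (forall s a, 0 <= Rw s a <= 1) ->
  \sum_s rho s * Rw s (f s) - (1 - agreement rho pi f)
    <= expect (sa_distr rho pi) Rw.
Proof.
move=> hrho hpi hRw; apply: le_trans (expect_ge_agreed f hrho hpi hRw).
have [rho0 rho1] := hrho.
have loss : \sum_s rho s * Rw s (f s) - \sum_s rho s * pi s (f s) * Rw s (f s)
    <= 1 - agreement rho pi f.
  rewrite -rho1 /agreement -!sumrB; apply: ler_sum => s _.
  have [p0 p1] := andP (policy_bounds s (f s) hpi).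
  have [r0 r1] := andP (hRw s (f s)).
  have : 0 <= rho s * (1 - pi s (f s)) * (1 - Rw s (f s)).
    by rewrite !mulr_ge0 // subr_ge0.
  lra.
lra.
Qed.

Lemma stationary_l1_gap (pi : S -> A -> R) (f : S -> A) (rhoI rhoE : S -> R)
    (tau : nat) :
  is_policy pi ->
  is_stationary (induced_chain K pi) rhoI ->
  is_stationary (induced_chain K (det_policy f)) rhoE ->
  mix_ok (induced_chain K (det_policy f)) rhoE tau ->
  norm1 (fun s => rhoI s - rhoE s) <= 4%:R * tau%:R * (1 - agreement rhoI pi f).
Proof.
move=> hpi statI statE hmix.
have mass0 : \sum_s (rhoI s - rhoE s) = 0.
  by rewrite sumrB statI.1.2 statE.1.2 subrr.
apply: le_trans (mixing_l1_bound (det_chain_stochastic f) mass0 hmix) _.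
rewrite (_ : 4%:R * _ * _ = 2%:R * tau%:R * (2%:R * (1 - agreement rhoI pi f))).
  by apply: ler_wpM2l; [rewrite mulr_ge0 | exact: stationary_deviation].
by ring.
Qed.

Lemma reward_transfer (pi : S -> A -> R) (f : S -> A) (rhoI rhoE : S -> R)
    (tau : nat) (Rw : S -> A -> R) :
  is_policy pi ->
  is_stationary (induced_chain K pi) rhoI ->
  is_stationary (induced_chain K (det_policy f)) rhoE ->
  mix_ok (induced_chain K (det_policy f)) rhoE tau ->
  (forall s a, 0 <= Rw s a <= 1) ->
  \sum_s rhoE s * Rw s (f s) - (2%:R * tau%:R + 1) * (1 - agreement rhoI pi f)
    <= expect (sa_distr rhoI pi) Rw.
Proof.
move=> hpi statI statE hmix hRw.
have mass0 : \sum_s (rhoI s - rhoE s) = 0.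
  by rewrite sumrB statI.1.2 statE.1.2 subrr.
have gap := zero_mass_integral mass0 (fun s => hRw s (f s)).
rewrite (eq_bigr _ (fun s _ => mulrBl (Rw s (f s)) _ _)) sumrB in gap.
have gap_abs := ler_norm (\sum_s rhoE s * Rw s (f s) - \sum_s rhoI s * Rw s (f s)).
rewrite distrC in gap_abs.
have := stationary_l1_gap hpi statI statE hmix.
have := expect_lower_bound f statI.1 hpi hRw.
lra.
Qed.

(* with a single state both chains coincide with the expert's: E_I >= c E_E *)
Lemma single_state_expect (pi : S -> A -> R) (f : S -> A) (rhoI rhoE : S -> R)
    (Rw : S -> A -> R) (s0 : S) :
  (forall s, s = s0) -> is_distr rhoI -> is_distr rhoE -> is_policy pi ->
  (forall s a, 0 <= Rw s a <= 1) ->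
  agreement rhoI pi f * \sum_s rhoE s * Rw s (f s) <= expect (sa_distr rhoI pi) Rw.
Proof.
move=> single hrhoI [_ rhoE1] hpi hRw.
have sum_single (F : S -> R) : \sum_s F s = F s0.
  by rewrite (bigD1 s0) //= big1 ?addr0 // => s; rewrite (single s) eqxx.
apply: le_trans (expect_ge_agreed f hrhoI hpi hRw).
by rewrite /agreement !sum_single in rhoE1 *; rewrite rhoE1 mul1r.
Qed.

End MDPComparison.

Lemma final_inequality (R : realFieldType) (tau : nat) (c kappa X : R) :
  (0 < tau)%N -> 1 - kappa <= c -> c <= 1 -> 0 <= X ->
  (1 - kappa) * X - 4%:R * tau%:R * kappa <= X - (2%:R * tau%:R + 1) * (1 - c).
Proof.
move=> tau_pos c_ge c_le1 X_ge0.
have tau_ge1 : 1 <= tau%:R :> R by rewrite ler1n.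
have h1 : 0 <= tau%:R * (kappa - (1 - c)) by apply: mulr_ge0; lra.
have h2 : 0 <= (tau%:R - 1) * kappa by apply: mulr_ge0; lra.
have h3 : 0 <= kappa * X by apply: mulr_ge0; lra.
have h4 : 0 <= tau%:R * kappa by apply: mulr_ge0; lra.
lra.
Qed.

Theorem lemma7 (R : realFieldType) (S A : finType)
  (K : S -> A -> S -> R) (hK : is_kernel K)
  (fE : S -> A)
  (rhoE_S : S -> R) (tau : nat)
  (hirrE : irreducible (induced_chain K (det_policy fE)))
  (hapE : aperiodic (induced_chain K (det_policy fE)))
  (hstE : is_stationary (induced_chain K (det_policy fE)) rhoE_S)
  (hmix : is_mixing_time (induced_chain K (det_policy fE)) rhoE_S tau)
  (s0 : S) (tr : seq S) (htr : expert_traj K fE s0 tr)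
  (piI : S -> A -> R) (hpiI : is_policy piI) (rhoI_S : S -> R)
  (hirrI : irreducible (induced_chain K piI))
  (hapI : aperiodic (induced_chain K piI))
  (hstI : is_stationary (induced_chain K piI) rhoI_S)
  (kappa : R)
  (hkappa : expect (sa_distr rhoI_S piI) (R_int (traj_pairs fE s0 tr)) = 1 - kappa) :
  forall Rw : S -> A -> R, (forall s a, 0 <= Rw s a <= 1) ->
    expect (sa_distr rhoI_S piI) Rw >=
      (1 - kappa) * expect (sa_distr rhoE_S (det_policy fE)) Rw - 4%:R * tau%:R * kappa.
Proof.
move=> Rw hRw.
have c_ge : 1 - kappa <= agreement rhoI_S piI fE.
  by rewrite -hkappa; apply: expect_Rint_le_agreement hstI.1 hpiI.
have EE_ge0 : 0 <= \sum_s rhoE_S s * Rw s (fE s).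
  by apply: sumr_ge0 => s _; rewrite mulr_ge0 ?hstE.1.1 //; case/andP: (hRw s (fE s)).
rewrite expect_det.
have [tau0 | tau_pos] := posnP tau.
  have mix0 : mix_ok (induced_chain K (det_policy fE)) rhoE_S 0.
    by rewrite -tau0; exact: hmix.1.
  have single s : s = s0 := mixing_time0_single_state hstE.1 mix0 s s0.
  rewrite tau0 mulr0 mul0r subr0.
  apply: le_trans (single_state_expect fE single hstI.1 hstE.1 hpiI hRw).
  exact: ler_wpM2r.
apply: le_trans (reward_transfer hK hpiI hstI hstE hmix.1 hRw).
apply: final_inequality => //; exact: agreement_le1 hstI.1 hpiI.
Qed.
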